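(* Let $m,n\in\mathbb{N}$, let $\alpha\in\mathbb{Z}_n$ and let $f:\mathbb{Z}_n\to\mathbb{C}$ be given by $f(x)=\widehat f(\alpha)\chi_{\alpha}(x)$ (a $1$-sparse function). Let $\ell:=\min(n,m)$ and let $g:\mathbb{Z}_m\to\mathbb{C}$ be defined by $g(x)=f(x)$ for $0\le x<\ell$ and $g(x)=0$ otherwise. If $\beta\in\mathbb{Z}_m$ satisfies $\beta=\frac mn\alpha$, then $|\widehat g(\beta)|=\frac\ell m|\widehat f(\alpha)|$. For all $\beta\in\mathbb{Z}_m$ with $\beta\neq\frac mn\alpha$, \[|\widehat g(\beta)|\le|\widehat f(\alpha)|\min\Big(\frac\ell m,\ \frac{1}{2|\frac mn\alpha-\beta|_m}\Big).\] Moreover, if $\beta=\lfloor\frac mn\alpha\rceil$ (taken in $\mathbb{Z}_m$), then \[|\widehat g(\beta)|\ge|\widehat f(\alpha)|\max\Big(\frac{2\ell}{\pi m},\ \frac\ell m\sqrt{1-\frac{\pi^2\ell^2}{3m^2}\Big|\frac mn\alpha-\beta\Big|_m^2}\Big).\]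
   Context: $\mathbb{Z}_n=\{0,\dots,n-1\}$ with addition mod $n$; elements are treated as these integer representatives. $\chi_\alpha(x)=\exp(2\pi i\alpha x/n)$ on $\mathbb{Z}_n$; for $h:\mathbb{Z}_m\to\mathbb{C}$, $\widehat h(\beta)=\frac1m\sum_{x\in\mathbb{Z}_m}h(x)\exp(-2\pi i\beta x/m)$. $\lfloor x\rceil$ denotes the integer nearest to $x\in\mathbb{R}$. For $k\in\mathbb{N}$ and $x\in\mathbb{R}$, $|x|_k=\min\{|x-kz|:z\in\mathbb{Z}\}$. *)

From mathcomp Require Import all_boot all_algebra.
From mathcomp Require Import all_classical all_reals all_analysis.
From mathcomp Require Export complex.
Set Implicit Arguments. Unset Strict Implicit. Unset Printing Implicit Defensive.
Import GRing.Theory Num.Theory.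
Local Open Scope ring_scope.
Local Open Scope classical_set_scope.
Local Open Scope complex_scope.

Definition expi (R : realType) (t : R) : R[i] := (cos t +i* sin t)%C.

(* chi_a(x) = exp(2 pi i a x / n) on Z_n (elements as representatives 0..n-1) *)
Definition chi (R : realType) (n a x : nat) : R[i] :=
  expi (2 * pi * a%:R * x%:R / n%:R).

(* hat h(b) = 1/m sum_{x in Z_m} h(x) exp(-2 pi i b x / m); h : Z_m -> C is given
   as a function on nat of which only the values at 0..m-1 are used. *)
Definition dft (R : realType) (m : nat) (h : nat -> R[i]) (b : nat) : R[i] :=
  ((m%:R : R)^-1)%:C * \sum_(x < m) h x * expi (- (2 * pi * b%:R * x%:R / m%:R)).

Definition zdist (R : realType) (k : nat) (x : R) : R :=
  inf [set `|x - k%:R * z%:~R| | z in [set: int]].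

(* nearest integer, ties rounded up *)
Definition nearest (R : realType) (x : R) : int := Num.floor (x + 2^-1).

Definition cmod (R : realType) (z : R[i]) : R := ComplexField.Normc.normc z.

From mathcomp Require Import all_boot all_algebra.
From mathcomp Require Import all_classical all_reals all_analysis.
From mathcomp Require Import complex.
From mathcomp Require Import lra ring.
Set Implicit Arguments. Unset Strict Implicit. Unset Printing Implicit Defensive.
Import order.Order.TTheory GRing.Theory Num.Theory.
Local Open Scope ring_scope.

(* The transform of [g] at [beta] is [dft n f alpha / m] times the geometric
   sum [\sum_(x < l) e^(i p x)] with phase [p = 2 pi (t - beta) / m], whose
   modulus is [|sin (l p / 2)| / |sin (p / 2)|].  It only depends on [t - beta]
   modulo [m], so [t - beta] may be replaced by a representative [u] with
   [|u| = zdist m (t - beta) <= m / 2].  The upper bounds are the triangle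
   inequality and Jordan's inequality [sin y >= 2 y / pi] in the denominator.
   When [beta] is the rounding of [t], [|u| <= 1/2], so [l |p| / 2 <= pi / 2];
   then [sin y <= y] in the denominator and, in the numerator, Jordan's
   inequality resp. [sin y >= y - y^3 / 6] give the two lower bounds. *)

Section Trigonometry.
Variable R : realType.
Implicit Types x y : R.

Lemma ger0_is_derive_le (f df : R -> R) (a b : R) : a <= b ->
  (forall x, is_derive x 1 f (df x)) -> (forall x, a <= x <= b -> 0 <= df x) ->
  f a <= f b.
Proof.
move=> ab fd dfp.
have [|c] := MVT_segment ab (fun x _ => fd x).
  by apply: derivable_within_continuous => x _; exact: ex_derive.
rewrite in_itv /= => cab e.
by rewrite -subr_ge0 e mulr_ge0 ?dfp // subr_ge0.
Qed.

Lemma sin_le_id x : 0 <= x -> sin x <= x.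
Proof.
move=> x0.
have D y : is_derive y 1 (id - sin : R -> R) (1 - cos y) by apply: is_derive_eq.
have := ger0_is_derive_le x0 D.
rewrite !fctE sin0 subr0 subr_ge0; apply=> y _.
by rewrite subr_ge0 cos_le1.
Qed.

Lemma cos_ge_taylor2 x : 1 - x ^+ 2 / 2 <= cos x.
Proof.
wlog x0 : x / 0 <= x.
  move=> le_cos; have [/le_cos//|/ltW x0] := leP 0 x.
  by rewrite -cosN -sqrrN le_cos ?oppr_ge0.
have D y : is_derive y 1 (cos + (fun y => y ^+ 2 / 2) : R -> R) (y - sin y).
  by apply: is_derive_eq; rewrite /GRing.scale /=; field.
have := ger0_is_derive_le x0 D.
rewrite !fctE cos0 expr0n mul0r addr0 -lerBlDr; apply=> y /andP[y0 _].
by rewrite subr_ge0 sin_le_id.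
Qed.

Lemma sin_ge_taylor3 x : 0 <= x -> x - x ^+ 3 / 6 <= sin x.
Proof.
move=> x0.
have D y : is_derive y 1 (sin - id + (fun y => y ^+ 3 / 6) : R -> R)
                       (cos y - (1 - y ^+ 2 / 2)).
  by apply: is_derive_eq; rewrite /GRing.scale /=; field.
have := ger0_is_derive_le x0 D.
rewrite !fctE sin0 expr0n mul0r subrr addr0 => le_sin.
suff : 0 <= sin x - x + x ^+ 3 / 6 by lra.
by apply: le_sin => y _; rewrite subr_ge0 cos_ge_taylor2.
Qed.

Lemma cos_nincr x y : 0 <= x <= y -> y <= pi -> cos y <= cos x.
Proof.
move=> /andP[x0 xy] ypi.
rewrite leNgt ltr_cos ?in_itv /= ?x0 ?ypi ?(le_trans x0) //.
  by rewrite -leNgt.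
by rewrite (le_trans xy).
Qed.

Lemma sin_norm x : `|x| <= pi -> sin `|x| = `|sin x|.
Proof.
have [x0|x0] := leP 0 x => xpi.
  by rewrite !ger0_norm // sin_ge0_pi // x0 -(ger0_norm x0).
have sNx : 0 <= sin (- x).
  by rewrite sin_ge0_pi // oppr_ge0 ltW //= -(ltr0_norm x0).
by rewrite ltr0_norm // sinN ler0_norm // -oppr_ge0 -sinN.
Qed.

Lemma jordan_sin x : 0 <= x <= pi / 2 -> 2 * x / pi <= sin x.
Proof.
move=> /andP[x0 xpi].
have pi_pos := pi_gt0 R.
set g := (sin - (fun y => 2 / pi * y)) : R -> R.
have dg y : is_derive y 1 g (cos y - 2 / pi).
  by apply: is_derive_eq; rewrite /GRing.scale /= mulr1.
have g0 : g 0 = 0 by rewrite /g !fctE sin0 mulr0 subrr.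
have gpi : g (pi / 2) = 0.
  by rewrite /g !fctE sin_pihalf mulrA divfK ?gt_eqF // divff ?subrr.
suff : 0 <= g x by rewrite /g !fctE subr_ge0 mulrAC.
have [cx|cx] := leP (2 / pi) (cos x).
  rewrite -g0; apply: ger0_is_derive_le x0 dg _ => y /andP[y0 yx].
  by rewrite subr_ge0 (le_trans cx) // cos_nincr ?y0 // (le_trans xpi); lra.
have dNg y : is_derive y 1 (- g) (- (cos y - 2 / pi)) by apply: is_derive_eq.
suff : (- g) x <= (- g) (pi / 2) by rewrite !fctE gpi oppr0 oppr_le0.
apply: ger0_is_derive_le xpi dNg _ => y /andP[xy ypi].
rewrite oppr_ge0 subr_le0 ltW // (le_lt_trans _ cx) // cos_nincr ?x0 //.
by rewrite (le_trans ypi); lra.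
Qed.

End Trigonometry.

Section ComplexExponential.
Variable R : realType.
Local Notation C := R[i].
Implicit Types (x y : R) (z w : C).

Lemma cmod_ge0 z : 0 <= cmod z.
Proof. by case: z => a b; rewrite /cmod sqrtr_ge0. Qed.

Lemma cmodM z w : cmod (z * w) = cmod z * cmod w.
Proof. exact: ComplexField.Normc.normcM. Qed.

Lemma cmod_real x : cmod x%:C%C = `|x|.
Proof. by rewrite /cmod /= expr0n /= addr0 sqrtr_sqr. Qed.

Lemma cmod_nat (k : nat) : cmod (k%:R : C) = k%:R.
Proof. by rewrite /cmod normcMn ComplexField.Normc.normc1. Qed.

Lemma cmod_sum_le (I : Type) (r : seq I) (P : pred I) (F : I -> C) :
  cmod (\sum_(i <- r | P i) F i) <= \sum_(i <- r | P i) cmod (F i).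
Proof.
elim/big_rec2: _ => [|i y1 y2 _ le_y].
  by rewrite /cmod ComplexField.Normc.normc0.
by apply: le_trans (le_normcD _ _) _; rewrite lerD2l.
Qed.

Lemma expi0 : expi (0 : R) = 1.
Proof. by rewrite /expi cos0 sin0. Qed.

Lemma expiD x y : expi (x + y) = expi x * expi y.
Proof.
rewrite /expi cosD sinD; apply/eqP; rewrite eq_complex /=.
by apply/andP; split; apply/eqP; ring.
Qed.

Lemma expi_periodic x (k : int) : expi (x + 2 * pi * k%:~R) = expi x.
Proof.
have expi_pern (y : R) (n : nat) : expi (y + 2 * pi * n%:R) = expi y.
  have -> : 2 * pi * n%:R = (pi *+ 2) *+ n :> R by ring.
  by rewrite /expi (periodicn (@cosD2pi R)) (periodicn (@sinD2pi R)).
case: k => n; first exact: expi_pern.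
rewrite -(expi_pern _ n.+1); congr expi.
by rewrite NegzE mulrNz; ring.
Qed.

Lemma cmod_expi x : cmod (expi x) = 1.
Proof. by rewrite /cmod /expi /= cos2Dsin2 sqrtr1. Qed.

Lemma cmod_expiB1 x : cmod (expi x - 1) = 2 * `|sin (x / 2)|.
Proof.
rewrite /cmod /expi /=.
set h := x / 2.
have -> : x = h *+ 2 by rewrite /h -mulr_natr; field.
rewrite sin_mulr2n cos_mulr2n subr0.
set c := cos h; set s := sin h.
have -> : (c ^+ 2 *+ 2 - 1 - 1) ^+ 2 + ((c * s) *+ 2) ^+ 2 =
          (2 * s) ^+ 2 + 4 * (c ^+ 2 + s ^+ 2 - 1) * (c ^+ 2 - 1) by ring.
by rewrite cos2Dsin2 subrr mulr0 mul0r addr0 sqrtr_sqr normrM ger0_norm.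
Qed.

End ComplexExponential.

Section GeometricSum.
Variable R : realType.
Local Notation C := R[i].
Implicit Types p : R.

Definition geom_expi (l : nat) p : C := \sum_(x < l) expi (p * x%:R).

Lemma geom_expi0 l : geom_expi l 0 = l%:R.
Proof.
rewrite /geom_expi; under eq_bigr do rewrite mul0r expi0.
by rewrite sumr_const card_ord.
Qed.

Lemma geom_expi_periodic l p (k : int) :
  geom_expi l (p + 2 * pi * k%:~R) = geom_expi l p.
Proof.
apply: eq_bigr => x _.
by rewrite mulrDl -mulrA -[x%:R]/((x : nat)%:~R) -intrM expi_periodic.
Qed.

Lemma geom_expi_telescope l p :
  (expi p - 1) * geom_expi l p = expi (p * l%:R) - 1.
Proof.
elim: l => [|l IHl]; first by rewrite /geom_expi big_ord0 !mulr0 expi0 subrr.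
rewrite /geom_expi big_ord_recr /= mulrDr IHl.
by rewrite -addn1 natrD mulrDr mulr1 expiD; ring.
Qed.

Lemma cmod_geom_expi_le l p : cmod (geom_expi l p) <= l%:R.
Proof.
apply: le_trans (cmod_sum_le _ _ _) _.
by under eq_bigr do rewrite cmod_expi; rewrite sumr_const card_ord.
Qed.

Lemma cmod_geom_expi_sin l p :
  `|sin (p / 2)| * cmod (geom_expi l p) = `|sin (p * l%:R / 2)|.
Proof.
have := congr1 (@cmod R) (geom_expi_telescope l p).
rewrite cmodM !cmod_expiB1 => e.
by apply: (@mulfI _ 2); rewrite ?pnatr_eq0 // mulrA e.
Qed.

Lemma normr_half p : `|p / 2| = `|p| / 2.
Proof. by rewrite normrM [`|2^-1|]ger0_norm. Qed.

Lemma cmod_geom_expi_ub l p : p != 0 -> `|p| <= pi ->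
  cmod (geom_expi l p) <= pi / `|p|.
Proof.
move=> p0 p_le_pi.
have pi_gt0 := pi_gt0 R; have p_gt0 : 0 < `|p| by rewrite normr_gt0.
have jordan : `|p| / pi <= `|sin (p / 2)|.
  have half_le_pi : `|p / 2| <= pi by rewrite normr_half; lra.
  rewrite -sin_norm // normr_half.
  have := @jordan_sin _ (`|p| / 2).
  by rewrite [2 * _]mulrC divfK ?pnatr_eq0 //; apply; rewrite divr_ge0 //=; lra.
have : cmod (geom_expi l p) * (`|p| / pi) <= 1.
  apply: le_trans (sin_max (p * l%:R / 2)).
  by rewrite -cmod_geom_expi_sin mulrC ler_wpM2r ?cmod_ge0.
by rewrite mulrA ler_pdivrMr // mul1r ler_pdivlMr.
Qed.

Lemma cmod_geom_expi_ge l p : l%:R * `|p| <= pi ->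
  sin (l%:R * `|p| / 2) / (`|p| / 2) <= cmod (geom_expi l p).
Proof.
(* For [p = 0] the left-hand side is [_ / 0 = 0]. *)
have [->|p0] := eqVneq p 0.
  by move=> _; rewrite normr0 mul0r invr0 mulr0 cmod_ge0.
case: l => [|l] lp; first by rewrite !mul0r sin0 mul0r cmod_ge0.
have pi_gt0 := pi_gt0 R; have p_gt0 : 0 < `|p| by rewrite normr_gt0.
have p_le_lp : `|p| <= l.+1%:R * `|p| by rewrite ler_peMl // ler1n.
set h := `|p| / 2.
have h_gt0 : 0 < h by rewrite divr_gt0.
have norm_lp : `|p * l.+1%:R / 2| = l.+1%:R * `|p| / 2.
  by rewrite normr_half normrM normr_nat [`|p| * _]mulrC.
have sin_h : `|sin (p / 2)| = sin h by rewrite -sin_norm normr_half //; lra.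
have sin_lh : `|sin (p * l.+1%:R / 2)| = sin (l.+1%:R * `|p| / 2).
  by rewrite -sin_norm norm_lp //; lra.
have sin_h_gt0 : 0 < sin h by rewrite sin_gt0_pi // h_gt0 /h; lra.
rewrite -sin_lh -cmod_geom_expi_sin sin_h ler_pdivrMr // [cmod _ * h]mulrC.
by rewrite ler_wpM2r ?cmod_ge0 ?sin_le_id ?ltW.
Qed.

Lemma cmod_geom_expi_ge_jordan l p : l%:R * `|p| <= pi ->
  2 * l%:R / pi <= cmod (geom_expi l p).
Proof.
move=> lp; have pi_gt0 := pi_gt0 R.
have [->|p0] := eqVneq p 0.
  rewrite geom_expi0 cmod_nat ler_pdivrMr // [2 * _]mulrC.
  by rewrite ler_wpM2l ?pi_ge2.
apply: le_trans (cmod_geom_expi_ge lp).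
have -> : 2 * l%:R / pi = 2 * (l%:R * `|p| / 2) / pi / (`|p| / 2).
  (* [field] would unfold [pi], so it is abstracted first. *)
  by move: (pi : R) pi_gt0 => q q_gt0; field; rewrite normr_eq0 p0 gt_eqF.
apply: ler_wpM2r (jordan_sin _); first by rewrite invr_ge0 divr_ge0.
by rewrite divr_ge0 ?mulr_ge0 //=; lra.
Qed.

Lemma cmod_geom_expi_ge_sqrt l p : l%:R * `|p| <= pi ->
  l%:R * Num.sqrt (1 - (l%:R * p) ^+ 2 / 12) <= cmod (geom_expi l p).
Proof.
move=> lp; have [->|p0] := eqVneq p 0.
  by rewrite geom_expi0 cmod_nat mulr0 expr0n /= mul0r subr0 sqrtr1 mulr1.
apply: le_trans (cmod_geom_expi_ge lp).
have p_gt0 : 0 < `|p| by rewrite normr_gt0.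
set B := l%:R * `|p| / 2.
have B_ge0 : 0 <= B by rewrite divr_ge0 ?mulr_ge0.
have B_le2 : B <= 2 by have := pihalf_lt2 R; rewrite /B; lra.
have -> : (l%:R * p) ^+ 2 / 12 = B ^+ 2 / 3.
  by rewrite /B exprMn -[p ^+ 2](real_normK (num_real p)); field.
have taylor : l%:R * (1 - B ^+ 2 / 6) <= sin B / (`|p| / 2).
  have -> : l%:R * (1 - B ^+ 2 / 6) = (B - B ^+ 3 / 6) / (`|p| / 2).
    by rewrite /B; field; rewrite normr_eq0.
  by rewrite ler_wpM2r ?invr_ge0 ?divr_ge0 ?sin_ge_taylor3.
apply: le_trans taylor; rewrite ler_wpM2l //.
have taylor_ge0 : 0 <= 1 - B ^+ 2 / 6 by rewrite expr2; nra.
rewrite -[X in _ <= X](ger0_norm taylor_ge0) -sqrtr_sqr ler_wsqrtr //; nra.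
Qed.

End GeometricSum.

Section NearestInteger.
Variable R : realType.
Implicit Types (x u y : R) (m : nat).

Lemma normr_sub_nearest x : `|x - (nearest x)%:~R| <= 2^-1.
Proof.
have := floor_le (x + 2^-1); have := floorD1_gt (x + 2^-1).
rewrite -/(nearest x) intrD => lt_floor le_floor.
by rewrite ler_norml; apply/andP; split; lra.
Qed.

Lemma normr_sub_mul_nearest m y : (0 < m)%N ->
  `|y - m%:R * (nearest (y / m%:R))%:~R| <= m%:R / 2.
Proof.
move=> m_gt0; set k := nearest _.
have -> : y - m%:R * k%:~R = m%:R * (y / m%:R - k%:~R).
  by field; rewrite pnatr_eq0 -lt0n.
by rewrite normrM normr_nat ler_wpM2l // normr_sub_nearest.
Qed.

Lemma normr_mulz_ge m (j : int) : j != 0 -> m%:R <= `|m%:R * j%:~R| :> R.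
Proof.
move=> j_neq0; rewrite normrM normr_nat ler_peMr //.
by rewrite norm_intr_ge1 ?intr_int ?intr_eq0.
Qed.

Lemma normr_le_addmz m u (j : int) : `|u| <= m%:R / 2 ->
  `|u| <= `|u + m%:R * j%:~R|.
Proof.
move=> le_u; have [->|/(normr_mulz_ge m) m_le] := eqVneq j 0.
  by rewrite mulr0 addr0.
have := ler_normB (u + m%:R * j%:~R) u; rewrite addrAC subrr add0r; lra.
Qed.

Lemma zdist_addmz m u (k : int) : `|u| <= m%:R / 2 ->
  zdist m (u + m%:R * k%:~R) = `|u|.
Proof.
move=> le_u; rewrite /zdist; set S := (X in inf X).
have lb_u : lbound S `|u|.
  move=> _ [z _ <-]; rewrite -addrA -mulrBr -intrB; exact: normr_le_addmz.
have u_in : S `|u| by exists k => //; rewrite addrK.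
apply/le_anti/andP; split; first by apply: ge_inf u_in; exists `|u|.
by apply: lb_le_inf lb_u; exists `|u|.
Qed.

End NearestInteger.

Section TruncatedOneSparse.
Variable R : realType.
Local Notation C := R[i].

Lemma dft_truncated_char (m n l alpha beta : nat) (a : C) (f : nat -> C) :
  (0 < m)%N -> (0 < n)%N -> (l <= m)%N ->
  (forall x, (x < l)%N -> f x = a * chi R n alpha x) ->
  dft m (fun x => if (x < l)%N then f x else 0) beta =
  ((m%:R : R)^-1)%:C%C * a
  * geom_expi l (2 * pi * (m%:R / n%:R * alpha%:R - beta%:R) / m%:R).
Proof.
move=> m_gt0 n_gt0 lm f_char; rewrite /dft /geom_expi -[RHS]mulrA; congr (_ * _).
rewrite mulr_sumr (big_ord_widen _ (fun x : nat => a * expi (_ * x%:R)) lm).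
rewrite [RHS]big_mkcond; apply: eq_bigr => x _.
case: ifP => [xl|_]; last by rewrite mul0r.
rewrite f_char // /chi -mulrA -expiD; congr (_ * expi _).
by move: (pi : R) => q; field; rewrite !pnatr_eq0 -!lt0n m_gt0 n_gt0.
Qed.

Lemma geom_expi_phase_periodic l (m : nat) (y : R) (k : int) : (0 < m)%N ->
  geom_expi l (2 * pi * (y + m%:R * k%:~R) / m%:R)
  = geom_expi l (2 * pi * y / m%:R).
Proof.
move=> m_gt0; rewrite -[RHS](geom_expi_periodic _ _ k); congr geom_expi.
by move: (pi : R) => q; field; rewrite pnatr_eq0 -lt0n.
Qed.

Lemma normr_phase (m : nat) (u : R) :
  `|2 * pi * u / m%:R| = 2 * pi * `|u| / m%:R.
Proof.
by rewrite !normrM normfV !normr_nat (ger0_norm (pi_ge0 R)).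
Qed.

Section OneSparse.
Variables (m n alpha : nat) (f : nat -> C).
Hypotheses (m_gt0 : (0 < m)%N) (alpha_lt_n : (alpha < n)%N)
  (f_sparse : forall x, (x < n)%N -> f x = dft n f alpha * chi R n alpha x).

Local Notation l := (minn n m).
Local Notation g := (fun x : nat => if (x < l)%N then f x else 0).
Local Notation c := (cmod (dft n f alpha)).
Local Notation t := (m%:R / n%:R * alpha%:R : R).

Let n_gt0 : (0 < n)%N. Proof. exact: leq_ltn_trans alpha_lt_n. Qed.
Let M_gt0 : 0 < m%:R :> R. Proof. by rewrite ltr0n. Qed.

Let normr_t_subn_lt beta : (beta < m)%N -> `|t - beta%:R| < m%:R.
Proof.
move=> beta_lt_m; have t_ge0 : 0 <= t by rewrite mulr_ge0 ?divr_ge0.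
have t_lt_m : t < m%:R.
  by rewrite mulrAC ltr_pdivrMr ?ltr0n // ltr_pM2l // ltr_nat.
rewrite ltr_distl (lt_le_trans _ t_ge0) ?subr_lt0 ?ltr_nat //=.
by rewrite (lt_le_trans t_lt_m) // lerDr.
Qed.

Lemma cmod_dft_truncated beta :
  cmod (dft m g beta)
  = c / m%:R * cmod (geom_expi l (2 * pi * (t - beta%:R) / m%:R)).
Proof.
have f_char x : (x < l)%N -> f x = dft n f alpha * chi R n alpha x.
  by move=> xl; apply: f_sparse; apply: leq_trans xl (geq_minl _ _).
rewrite (dft_truncated_char _ m_gt0 n_gt0 (geq_minr n m) f_char).
by rewrite cmodM cmodM cmod_real ger0_norm ?invr_ge0 // [m%:R^-1 * _]mulrC.
Qed.

Lemma cmod_dft_truncated_aligned beta : beta%:R = t ->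
  cmod (dft m g beta) = l%:R / m%:R * c.
Proof.
move=> bt; rewrite cmod_dft_truncated bt subrr mulr0 mul0r geom_expi0 cmod_nat.
by rewrite mulrC mulrA mulrAC.
Qed.

Lemma cmod_dft_truncated_le beta : (beta < m)%N -> beta%:R != t ->
  cmod (dft m g beta)
  <= c * Num.min (l%:R / m%:R) (1 / (2 * zdist m (t - beta%:R))).
Proof.
move=> bm bt; set k := nearest ((t - beta%:R) / m%:R).
have le_u := normr_sub_mul_nearest (t - beta%:R) m_gt0; rewrite -/k in le_u.
set u := t - beta%:R - m%:R * k%:~R in le_u.
have tE : t - beta%:R = u + m%:R * k%:~R by rewrite subrK.
have u_neq0 : u != 0.
  apply: contra_neq bt => u0.
  have k0 : k = 0.
    apply/eqP; apply: contraTT (normr_t_subn_lt bm) => /(@normr_mulz_ge R m).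
    by rewrite -leNgt tE u0 add0r.
  by apply/esym/eqP; rewrite -subr_eq0 tE u0 k0 mulr0 addr0.
have u_gt0 : 0 < `|u| by rewrite normr_gt0.
rewrite cmod_dft_truncated tE zdist_addmz // geom_expi_phase_periodic //.
set X := cmod (geom_expi _ _).
rewrite [c / _ * X]mulrAC -[c * X / _]mulrA ler_wpM2l ?cmod_ge0 // le_min.
rewrite !ler_pdivrMr // divfK ?gt_eqF // cmod_geom_expi_le /=.
apply: le_trans (cmod_geom_expi_ub _ _ _) _.
- by rewrite -normr_eq0 normr_phase gt_eqF // !mulr_gt0 ?invr_gt0 ?pi_gt0.
- rewrite normr_phase ler_pdivrMr // [2 * pi]mulrC -mulrA ler_pM2l ?pi_gt0 //.
  by move: le_u; rewrite ler_pdivlMr //; lra.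
rewrite normr_phase [X in _ <= X](_ : _ = pi / (2 * pi * `|u| / m%:R)) //.
by move: (pi : R) (pi_gt0 R) => q q_gt0; field; rewrite !gt_eqF.
Qed.

Lemma cmod_dft_truncated_nearest beta : beta%:Z = (nearest t %% m%:Z)%Z ->
  c * Num.max (2 * l%:R / (pi * m%:R))
              (l%:R / m%:R * Num.sqrt (1 - pi ^+ 2 * l%:R ^+ 2 / (3 * m%:R ^+ 2)
                                           * zdist m (t - beta%:R) ^+ 2))
    <= cmod (dft m g beta).
Proof.
move=> bE; set N := nearest t; set k := (N %/ m%:Z)%Z.
have le_u := normr_sub_nearest t; rewrite -/N in le_u.
set u := t - N%:~R in le_u.
have modE : (N %% m%:Z)%Z = N - k * m%:Z.
  by rewrite [in RHS](divz_eq N m%:Z) addrAC subrr add0r.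
have tE : t - beta%:R = u + m%:R * k%:~R.
  by rewrite -[beta%:R]/(beta%:Z%:~R) bE modE /u intrB intrM; ring.
have lp : l%:R * `|2 * pi * u / m%:R| <= pi.
  have -> : l%:R * `|2 * pi * u / m%:R| = pi * (2 * l%:R * `|u| / m%:R).
    by rewrite normr_phase; move: (pi : R) => q; field; rewrite gt_eqF.
  rewrite ler_piMr ?pi_ge0 // ler_pdivrMr // mul1r.
  apply: (@le_trans _ _ l%:R); last by rewrite ler_nat geq_minr.
  by rewrite mulrAC ler_piMl //; lra.
have le_u_m : `|u| <= m%:R / 2.
  by apply: le_trans le_u _; rewrite -[X in X <= _]mul1r ler_wpM2r // ler1n.
rewrite cmod_dft_truncated tE zdist_addmz // geom_expi_phase_periodic //.
set X := cmod (geom_expi _ _).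
rewrite [c / _ * X]mulrAC -[c * X / _]mulrA ler_wpM2l ?cmod_ge0 // ge_max.
apply/andP; split.
  have -> : 2 * l%:R / (pi * m%:R) = 2 * l%:R / pi / m%:R :> R.
    by move: (pi : R) (pi_gt0 R) => q q_gt0; field; rewrite !gt_eqF.
  by rewrite ler_pM2r ?invr_gt0 // cmod_geom_expi_ge_jordan.
rewrite mulrAC ler_pM2r ?invr_gt0 //.
have -> : pi ^+ 2 * l%:R ^+ 2 / (3 * m%:R ^+ 2) * `|u| ^+ 2
          = (l%:R * (2 * pi * u / m%:R)) ^+ 2 / 12 :> R.
  rewrite real_normK ?num_real //.
  by move: (pi : R) => q; field; rewrite gt_eqF.
exact: cmod_geom_expi_ge_sqrt.
Qed.

End OneSparse.

End TruncatedOneSparse.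

Theorem lemma3p1 (R : realType) (m n alpha : nat) (f : nat -> R[i]) :
  (0 < m)%N -> (alpha < n)%N ->
  (forall x : nat, (x < n)%N -> f x = dft n f alpha * chi R n alpha x) ->
  let l := minn n m in
  let g := fun x : nat => if (x < l)%N then f x else 0 in
  let c := cmod (dft n f alpha) in
  let t : R := m%:R / n%:R * alpha%:R in
  (forall beta : nat, (beta < m)%N -> beta%:R = t ->
     cmod (dft m g beta) = l%:R / m%:R * c) /\
  (forall beta : nat, (beta < m)%N -> beta%:R != t ->
     cmod (dft m g beta) <=
       c * Num.min (l%:R / m%:R) (1 / (2 * zdist m (t - beta%:R)))) /\
  (forall beta : nat, (beta < m)%N -> beta%:Z = (nearest t %% m%:Z)%Z ->
     c * Num.max (2 * l%:R / (pi * m%:R))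
                 (l%:R / m%:R * Num.sqrt (1 - pi ^+ 2 * l%:R ^+ 2 / (3 * m%:R ^+ 2)
                                              * zdist m (t - beta%:R) ^+ 2))
       <= cmod (dft m g beta)).
Proof.
move=> m_gt0 alpha_lt_n f_sparse l g c t.
split; first by move=> beta _; exact: cmod_dft_truncated_aligned.
split; first exact: cmod_dft_truncated_le.
by move=> beta _; exact: cmod_dft_truncated_nearest.
Qed.
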